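(* Let $G$ be a graph. Then \[\chi(G) \leq \frac{1}{2} \left(\omega(G) + \Delta(G) + 1 \right) + \kappa(\overline{G}) + 1 - \frac{\alpha(G)}{4}.\]
   Context: All graphs are finite and simple with non-empty vertex set. $\chi$ is the chromatic number, $\omega$ the clique number, $\Delta$ the maximum degree, $\alpha$ the independence number. $\overline{G}$ is the complement of $G$, and $\kappa(\overline{G})$ is its vertex connectivity: the minimum size of a set $K$ of vertices with $\overline{G}-K$ disconnected, or $|G|-1$ if $\overline{G}$ is complete (here $|G|$ is the number of vertices). *)

(* A simple graph on a finite vertex type T is a
   symmetric irreflexive relation e : rel T. *)
From mathcomp Require Import all_boot all_order all_algebra.
Set Implicit Arguments.
Unset Strict Implicit.
Unset Printing Implicit Defensive.

Section Graphs.
Variable T : finType.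
Variable e : rel T.


Definition colourable (k : nat) : bool :=
  [exists f : {ffun T -> 'I_k}, [forall x, forall y, e x y ==> (f x != f y)]].

Lemma colourable_exists : irreflexive e -> exists k, colourable k.
Proof.
move=> irr; exists #|T|; apply/existsP; exists [ffun x => enum_rank x].
apply/forallP => x; apply/forallP => y; apply/implyP => exy.
rewrite !ffunE; apply/negP => /eqP /enum_rank_inj exy'.
by move: exy; rewrite exy' irr.
Qed.

Definition chi (irr : irreflexive e) : nat := ex_minn (colourable_exists irr).

Definition is_clique (A : {set T}) : bool :=
  [forall x in A, forall y in A, (x != y) ==> e x y].
Definition is_stable (A : {set T}) : bool :=
  [forall x in A, forall y in A, ~~ e x y].
Definition omega : nat := \max_(A : {set T} | is_clique A) #|A|.
Definition alpha : nat := \max_(A : {set T} | is_stable A) #|A|.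
Definition Delta : nat := \max_(x : T) #|[set y | e x y]|.

Definition compl_rel : rel T := [rel x y | (x != y) && ~~ e x y].

Definition disconnects (h : rel T) (K : {set T}) : bool :=
  [exists u, exists v, [&& u \notin K, v \notin K &
     ~~ connect [rel x y | [&& h x y, x \notin K & y \notin K]] u v]].

(* vertex connectivity: minimum size of a disconnecting set, or |V|-1 if
   no set disconnects (i.e. h is complete) *)
Definition kappa (h : rel T) : nat :=
  \big[minn/#|T|.-1]_(K : {set T} | disconnects h K) #|K|.
End Graphs.

From mathcomp Require Import all_boot all_order all_algebra zify lra.
Set Implicit Arguments.
Unset Strict Implicit.
Unset Printing Implicit Defensive.

(* If alpha(H) <= 2, the complement of H is triangle-free; colour H by a maximum
   matching M of the complement, one colour per edge of M and per unmatched
   vertex. Exchanges along M show that the unmatched vertices, together with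
   the mates of the complement neighbours of one unmatched vertex, span two
   cliques, whence 4 chi(H) <= 2 omega(H) + |H| + Delta(H) + 1. Removing a
   maximum stable set costs one colour, lowers Delta and only decreases
   omega, so by induction 4 chi(H) + max(alpha(H), 3) <= 2 omega(H) + |H| +
   Delta(H) + 4 for every induced subgraph H.
   A separator K of the complement of G splits V \ K into parts A and B
   that are completely joined in G: then omega(A) + omega(B) <= omega(G),
   |B| + Delta(A) <= Delta(G), and the part of a stable set outside K lies
   in A or in B. Colouring A and B as above and K with one colour for its share of a
   maximum stable set gives the bound with kappa = |K|; the case of a
   complete complement is direct. *)

Lemma cardsU_disjoint (T : finType) (A B : {set T}) :
  [disjoint A & B] -> #|A :|: B| = #|A| + #|B|.
Proof. by move=> dAB; rewrite cardsU disjoint_setI0 // cards0 subn0. Qed.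

Section Graph.
Variables (T : finType) (e : rel T).
Hypotheses (esym : symmetric e) (eirr : irreflexive e).

Definition omega_on (A : {set T}) : nat :=
  \max_(C : {set T} | (C \subset A) && is_clique e C) #|C|.
Definition alpha_on (A : {set T}) : nat :=
  \max_(C : {set T} | (C \subset A) && is_stable e C) #|C|.
Definition deg_in (A : {set T}) (x : T) : nat := #|[set y in A | e x y]|.
Definition Delta_on (A : {set T}) : nat := \max_(x in A) deg_in A x.
Definition compl_nbrs (A : {set T}) (x : T) : {set T} :=
  [set y in A | compl_rel e x y].

Lemma is_stableP (C : {set T}) :
  reflect {in C &, forall x y, ~~ e x y} (is_stable e C).
Proof.
apply: (iffP forall_inP) => [H x y xC | H x xC]; first exact: (forall_inP (H x xC)).
by apply/forall_inP => y; apply: H.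
Qed.

Lemma is_cliqueP (C : {set T}) :
  reflect {in C &, forall x y, x != y -> e x y} (is_clique e C).
Proof.
apply: (iffP forall_inP) => [H x y xC yC | H x xC].
  by have /forall_inP/(_ y yC)/implyP := H x xC.
by apply/forall_inP => y yC; apply/implyP; apply: H.
Qed.

Lemma is_cliqueU (C D : {set T}) : is_clique e C -> is_clique e D ->
  {in C & D, forall x y, e x y} -> is_clique e (C :|: D).
Proof.
move=> /is_cliqueP cC /is_cliqueP cD eCD.
apply/is_cliqueP => x y /setUP[xC|xD] /setUP[yC|yD] xy; [exact: cC | exact: eCD | | exact: cD].
by rewrite esym; apply: eCD.
Qed.

Lemma compl_relC : symmetric (compl_rel e).
Proof. by move=> x y; rewrite /compl_rel /= eq_sym esym. Qed.

Lemma compl_rel_neq x y : compl_rel e x y -> x != y.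
Proof. by case/andP. Qed.

Lemma compl_relN x y : x != y -> ~~ compl_rel e x y -> e x y.
Proof. by rewrite /compl_rel /= => -> /negPn. Qed.

Lemma clique_card_le_omega_on (C A : {set T}) :
  C \subset A -> is_clique e C -> #|C| <= omega_on A.
Proof.
move=> sCA cC.
by apply: (leq_bigmax_cond (P := fun C : {set T} => (C \subset A) && _)); rewrite sCA.
Qed.

Lemma stable_card_le_alpha_on (C A : {set T}) :
  C \subset A -> is_stable e C -> #|C| <= alpha_on A.
Proof.
move=> sCA sC.
by apply: (leq_bigmax_cond (P := fun C : {set T} => (C \subset A) && _)); rewrite sCA.
Qed.

Lemma omega_on_attained (A : {set T}) :
  exists C : {set T}, [/\ C \subset A, is_clique e C & #|C| = omega_on A].
Proof.
have P0 : (set0 \subset A) && is_clique e set0.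
  by rewrite sub0set; apply/forall_inP => x; rewrite inE.
rewrite /omega_on (bigmax_eq_arg (P := fun C : {set T} => (C \subset A) && is_clique e C) _ P0).
by case: arg_maxnP => // C /andP[sCA cC] _; exists C.
Qed.

Lemma alpha_on_attained (A : {set T}) :
  exists C : {set T}, [/\ C \subset A, is_stable e C & #|C| = alpha_on A].
Proof.
have P0 : (set0 \subset A) && is_stable e set0.
  by rewrite sub0set; apply/forall_inP => x; rewrite inE.
rewrite /alpha_on (bigmax_eq_arg (P := fun C : {set T} => (C \subset A) && is_stable e C) _ P0).
by case: arg_maxnP => // C /andP[sCA sC] _; exists C.
Qed.

Lemma deg_in_le_Delta_on (A : {set T}) x : x \in A -> deg_in A x <= Delta_on A.
Proof. exact: leq_bigmax_cond. Qed.

Lemma Delta_on_attained (A : {set T}) :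
  A != set0 -> exists2 x, x \in A & Delta_on A = deg_in A x.
Proof.
case/set0Pn => y yA; rewrite /Delta_on (bigmax_eq_arg _ yA).
by case: arg_maxnP => // x xA _; exists x.
Qed.

Lemma omega_onS (A B : {set T}) : A \subset B -> omega_on A <= omega_on B.
Proof.
move=> sAB; have [C [sCA cC <-]] := omega_on_attained A.
exact/clique_card_le_omega_on/cC/(subset_trans sCA).
Qed.

Lemma alpha_on_le_card (A : {set T}) : alpha_on A <= #|A|.
Proof. by have [C [sCA _ <-]] := alpha_on_attained A; apply: subset_leq_card. Qed.

Lemma card_compl_nbrs (A : {set T}) v : v \in A ->
  #|compl_nbrs A v| + deg_in A v + 1 = #|A|.
Proof.
move=> vA; rewrite /deg_in (cardsD1 v A) vA addn1 add1n -cardsUI.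
have -> : compl_nbrs A v :&: [set y in A | e v y] = set0.
  by apply/setP => y; rewrite !inE /compl_rel /=; case: (e v y); rewrite ?andbF.
rewrite cards0 addn0; congr _.+1; apply: eq_card => y; rewrite !inE /compl_rel /=.
case: (eqVneq y v) => [->|yv] /=; first by rewrite eirr !andbF.
by case: (e v y); case: (y \in A).
Qed.

Lemma max_stable_dominating (A S : {set T}) x :
  S \subset A -> is_stable e S -> #|S| = alpha_on A -> x \in A :\: S ->
  exists2 s, s \in S & e x s.
Proof.
move=> sSA stS cS /setDP[xA xS].
have [/exists_inP[s sS exs]|nE] := boolP [exists s in S, e x s]; first by exists s.
have : #|x |: S| <= alpha_on A.
  apply: stable_card_le_alpha_on; first by rewrite subUset sub1set xA.
  apply/is_stableP => a b; rewrite !inE => /predU1P[->|aS] /predU1P[->|bS].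
  - by rewrite eirr.
  - by apply: contra nE => exb; apply/exists_inP; exists b.
  - by apply: contra nE => eax; apply/exists_inP; exists a; rewrite // esym.
  - exact: (is_stableP _ stS).
by rewrite cardsU1 xS -cS ltnn.
Qed.

Lemma Delta_on_max_stableD (A S : {set T}) :
  S \subset A -> is_stable e S -> #|S| = alpha_on A -> A :\: S != set0 ->
  Delta_on (A :\: S) < Delta_on A.
Proof.
move=> sSA stS cS /Delta_on_attained[x xAS ->].
have [s sS exs] := max_stable_dominating sSA stS cS xAS.
have [xA _] := setDP xAS.
apply: leq_trans (deg_in_le_Delta_on xA); apply: proper_card; apply/properP; split.
  by apply/subsetP => y; rewrite !inE => /andP[/andP[_ ->] ->].
by exists s; rewrite !inE ?sS // exs (subsetP sSA).
Qed.

(* A colouring of A names each colour by a vertex of A; colourings of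
   disjoint sets therefore combine without renaming colours. *)
Definition colourable_on (A : {set T}) (k : nat) : Prop :=
  exists f : T -> T, [/\ {in A, forall x, f x \in A},
     {in A &, forall x y, e x y -> f x != f y} & #|f @: A| <= k].

Lemma colourable_on_card (A : {set T}) : colourable_on A #|A|.
Proof.
exists id; split => //; last by rewrite imset_id.
by move=> x y _ _; apply: contraTneq => ->; rewrite eirr.
Qed.

Lemma colourable_on_stable (S : {set T}) :
  is_stable e S -> colourable_on S (S != set0).
Proof.
move=> stS; have [->|[s sS]] := set_0Vmem S.
  by have := colourable_on_card set0; rewrite cards0 eqxx.
exists (fun _ => s); split => //.
  by move=> x y xS yS; rewrite (negbTE (is_stableP _ stS x y xS yS)).
have -> : S != set0 by apply/set0Pn; exists s.
by rewrite /= -(cards1 s); apply/subset_leq_card/subsetP => z /imsetP[x _ ->]; rewrite inE.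
Qed.

Lemma colourable_onU (A B : {set T}) ka kb : [disjoint A & B] ->
  colourable_on A ka -> colourable_on B kb -> colourable_on (A :|: B) (ka + kb).
Proof.
move=> dAB [fa [faA faP fak]] [fb [fbB fbP fbk]].
have notA x : x \in B -> (x \in A) = false.
  by move=> xB; apply: (disjointFl dAB).
exists (fun x => if x \in A then fa x else fb x); split.
- move=> x; rewrite !inE; case: ifP => [xA _|_ /= xB]; first by rewrite faA.
  by rewrite fbB ?orbT.
- move=> x y; rewrite !inE => /orP[xA|xB] /orP[yA|yB] exy.
  + by rewrite xA yA faP.
  + rewrite xA notA //; apply: contraTneq (faA x xA) => ->.
    by rewrite notA ?fbB.
  + rewrite yA notA //; apply: contraTneq (faA y yA) => <-.
    by rewrite notA ?fbB.
  + by rewrite !notA // fbP.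
- rewrite imsetU; apply: leq_trans (leq_card_setU _ _) (leq_add _ _).
    apply: leq_trans fak; apply/subset_leq_card/subsetP => z /imsetP[x xA ->].
    by rewrite xA imset_f.
  apply: leq_trans fbk; apply/subset_leq_card/subsetP => z /imsetP[x xB ->].
  by rewrite notA ?imset_f.
Qed.

Lemma colourable_on_stable_compl (S A : {set T}) : is_stable e S ->
  colourable_on A ((S :&: A != set0) + #|A :\: S|).
Proof.
move=> stS; rewrite -{1}(setID A S) setIC.
apply: colourable_onU; last exact: colourable_on_card.
- by rewrite -setI_eq0; apply/eqP/setP => x; rewrite !inE; case: (x \in S); rewrite ?andbF.
- by apply: colourable_on_stable; apply/is_stableP => x y /setIP[xS _] /setIP[yS _];
    apply: (is_stableP _ stS).
Qed.

Lemma chi_le_colourable k : 0 < #|T| -> colourable_on setT k -> chi eirr <= k.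
Proof.
move=> /card_gt0P[x0 _] [f [_ fP fk]].
set im := f @: setT.
have f_im x : f x \in enum im by rewrite mem_enum imset_f ?inE.
case: k fk => [|k] fk.
  by move: fk; rewrite leqn0 cards_eq0 => /eqP/setP/(_ (f x0)); rewrite imset_f ?inE.
have rk x : index (f x) (enum im) < k.+1.
  by apply: leq_trans fk; rewrite cardE index_mem.
have colg : colourable e k.+1.
  apply/existsP; exists [ffun x => Ordinal (rk x)].
  apply/forallP => x; apply/forallP => y; apply/implyP => exy; rewrite !ffunE.
  apply: contraTneq (fP x y (in_setT x) (in_setT y) exy) => /(congr1 val) /= Ei.
  by rewrite negbK -(nth_index (f x) (f_im x)) Ei nth_index.
by rewrite /chi; case: ex_minnP => m _ /(_ _ colg).
Qed.

Section ComplementMatching.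
Variable A : {set T}.

(* A matching of the complement of G[A] is encoded as an involution [p] of
   the vertices; [p x = x] means that [x] is unmatched. *)
Definition matching (p : {ffun T -> T}) : bool :=
  [forall x, (p (p x) == x) && ((p x != x) ==> (x \in A) && compl_rel e x (p x))].
Definition matched (p : {ffun T -> T}) : {set T} := [set x | p x != x].
Definition unmatched (p : {ffun T -> T}) : {set T} := [set x in A | p x == x].
Definition max_matching (p : {ffun T -> T}) : Prop :=
  matching p /\ forall q, matching q -> #|matched q| <= #|matched p|.

Lemma max_matching_exists : exists p, max_matching p.
Proof.
have m0 : matching [ffun x => x] by apply/forallP => x; rewrite !ffunE eqxx.
by case: (arg_maxnP (fun p => #|matched p|) m0) => p mp Hp; exists p.
Qed.

Lemma matchingK p : matching p -> involutive p.
Proof. by move=> mp x; have /andP[/eqP] := forallP mp x. Qed.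

Lemma matching_edge p x : matching p -> p x != x ->
  [/\ x \in A, p x \in A & compl_rel e x (p x)].
Proof.
move=> mp px; have /andP[_ /implyP/(_ px)/andP[xA cx]] := forallP mp x.
have /andP[_ /implyP] := forallP mp (p x); rewrite matchingK // eq_sym.
by case/(_ px)/andP.
Qed.

Lemma matching_neq_fixed p w y : matching p -> p w = w -> p y != y ->
  w != y /\ w != p y.
Proof.
move=> mp pw py; split; apply: contraTneq py.
  by move=> <-; rewrite pw eqxx.
by move=> wpy; rewrite negbK -{2}(matchingK mp y) -wpy pw.
Qed.

Lemma max_matching_unmatched p z w : max_matching p ->
  z \in A -> w \in A -> p z = z -> p w = w -> ~~ compl_rel e z w.
Proof.
move=> [mp pmax] zA wA pz pw; apply/negP => czw.
have zw := compl_rel_neq czw.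
pose q := [ffun y => if y == z then w else if y == w then z else p y].
have qz : q z = w by rewrite ffunE eqxx.
have qw : q w = z by rewrite ffunE eq_sym (negbTE zw) eqxx.
have qy y : y != z -> y != w -> q y = p y.
  by move=> yz yw; rewrite ffunE (negbTE yz) (negbTE yw).
have pyz y : y != z -> p y != z by apply: contraNneq => E; rewrite -pz -E matchingK.
have pyw y : y != w -> p y != w by apply: contraNneq => E; rewrite -pw -E matchingK.
have mq : matching q.
  apply/forallP => y.
  case: (eqVneq y z) => [->|yz]; first by rewrite qz qw eqxx eq_sym zw zA czw.
  case: (eqVneq y w) => [->|yw]; first by rewrite qw qz eqxx zw wA compl_relC czw.
  by rewrite !qy ?pyz ?pyw // matchingK // eqxx; have /andP[] := forallP mp y.
have matched_q : matched q = z |: (w |: matched p).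
  apply/setP => y; rewrite !inE.
  case: (eqVneq y z) => [->|yz]; first by rewrite qz eq_sym zw.
  by case: (eqVneq y w) => [->|yw]; rewrite ?qw ?zw ?qy.
have := pmax q mq; rewrite matched_q !cardsU1 !inE pz pw !eqxx (negbTE zw) /=.
lia.
Qed.

Lemma max_matching_swap p u x : max_matching p ->
  u \in A -> p u = u -> p x != x -> compl_rel e u x ->
  exists q, [/\ max_matching q, q u = x, q x = u, q (p x) = p x &
     forall z, z != u -> z != x -> z != p x -> q z = p z].
Proof.
move=> [mp pmax] uA pu px cux.
have [xA _ cxpx] := matching_edge mp px.
have [ux upx] := matching_neq_fixed mp pu px.
have xpx : x != p x by rewrite eq_sym.
pose q := [ffun z => if z == u then x else if z == x then u
                     else if z == p x then p x else p z].
have qu : q u = x by rewrite ffunE eqxx.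
have qx : q x = u by rewrite ffunE eq_sym (negbTE ux) eqxx.
have qpx : q (p x) = p x by rewrite ffunE eq_sym (negbTE upx) eq_sym (negbTE xpx) eqxx.
have qz z : z != u -> z != x -> z != p x -> q z = p z.
  by move=> zu zx zpx; rewrite ffunE (negbTE zu) (negbTE zx) (negbTE zpx).
have mq : matching q.
  apply/forallP => z.
  case: (eqVneq z u) => [->|zu]; first by rewrite qu qx eqxx eq_sym ux uA cux.
  case: (eqVneq z x) => [->|zx].
    by rewrite qx qu eqxx ux xA compl_relC cux.
  case: (eqVneq z (p x)) => [->|zpx]; first by rewrite qpx qpx eqxx.
  have pzu : p z != u by apply: contraNneq zu => E; rewrite -pu -E matchingK.
  have pzx : p z != x by apply: contraNneq zpx => <-; rewrite matchingK.
  have pzpx : p z != p x by apply: contraNneq zx => /(can_inj (matchingK mp)) ->.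
  by rewrite !qz // matchingK // eqxx; have /andP[] := forallP mp z.
have matched_q : matched q = u |: (matched p :\ p x).
  apply/setP => z; rewrite !inE.
  case: (eqVneq z u) => [->|zu]; first by rewrite qu eq_sym ux.
  case: (eqVneq z x) => [->|zx]; first by rewrite qx ux xpx px.
  by case: (eqVneq z (p x)) => [->|zpx]; rewrite ?qpx ?eqxx ?qz.
have card_q : #|matched q| = #|matched p|.
  rewrite matched_q cardsU1 [in RHS](cardsD1 (p x)) !inE pu eqxx andbF.
  by rewrite matchingK // eq_sym px.
by exists q; split => //; split => // r mr; rewrite card_q; apply: pmax.
Qed.

(* The colour classes of a matching: each matched pair is represented by its
   endpoint of smaller rank. *)
Definition mate_reps (p : {ffun T -> T}) : {set T} :=
  [set x in A | enum_rank x <= enum_rank (p x)].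

Lemma mate_reps_matched p x : x \in A :\: mate_reps p -> p x != x.
Proof. by case/setDP=> xA; rewrite inE xA /=; apply: contraNneq => ->. Qed.

Lemma mate_reps_mate p x : matching p ->
  x \in A :\: mate_reps p -> p x \in mate_reps p :\: unmatched p.
Proof.
move=> mp xh; have px := mate_reps_matched xh; have [xA pxA _] := matching_edge mp px.
move: xh; rewrite !inE matchingK // pxA xA /= -ltnNge eq_sym (negbTE px).
by move=> /andP[/ltnW ->].
Qed.

Lemma colourable_on_mate_reps p : matching p -> colourable_on A #|mate_reps p|.
Proof.
move=> mp; have high z : z \in A -> z \notin mate_reps p -> z \in A :\: mate_reps p.
  by move=> zA zr; rewrite inE zr zA.
exists (fun x => if x \in mate_reps p then x else p x); split.
- move=> x xA; case: ifP => // xr.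
  by have [] := matching_edge mp (mate_reps_matched (high x xA (negbT xr))).
- move=> x y xA yA exy.
  have nc : ~~ compl_rel e x y by rewrite /compl_rel /= exy andbF.
  case: ifP => xr; case: ifP => yr.
  + by apply: contraTneq exy => ->; rewrite eirr.
  + apply: contraNneq nc => ->; rewrite compl_relC.
    by have [] := matching_edge mp (mate_reps_matched (high y yA (negbT yr))).
  + apply: contraNneq nc => <-.
    by have [] := matching_edge mp (mate_reps_matched (high x xA (negbT xr))).
  + by apply: contraTneq exy => /(can_inj (matchingK mp)) ->; rewrite eirr.
- apply: subset_leq_card; apply/subsetP => _ /imsetP[x xA ->].
  case: ifP => // xr.
  by have /setDP[] := mate_reps_mate mp (high x xA (negbT xr)).
Qed.

Lemma card_mate_reps p : matching p ->
  2 * #|mate_reps p| = #|A| + #|unmatched p|.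
Proof.
move=> mp; have pK := matchingK mp.
have mate_high y : y \in mate_reps p :\: unmatched p -> p y \in A :\: mate_reps p.
  rewrite !inE => /andP[+ /andP[yA ry]]; rewrite yA /= => py.
  have [_ pyA _] := matching_edge mp py; rewrite pK pyA /= -ltnNge ltn_neqAle ry !andbT.
  by apply: contra py => /eqP/val_inj/enum_rank_inj <-.
have mate_onto : p @: (A :\: mate_reps p) = mate_reps p :\: unmatched p.
  apply/eqP; rewrite eqEsubset; apply/andP; split; apply/subsetP => y.
    by case/imsetP => x /(mate_reps_mate mp) + ->.
  by move=> yr; rewrite -[y]pK imset_f // mate_high.
have reps_sub : mate_reps p \subset A by apply/subsetP => x /setIdP[].
have unmatched_reps : unmatched p \subset mate_reps p.
  by apply/subsetP => x /setIdP[xA /eqP px]; rewrite inE xA px leqnn.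
rewrite -(cardsID (mate_reps p) A) (setIidPr reps_sub).
rewrite -[#|A :\: _|](card_imset _ (can_inj pK)) mate_onto.
by rewrite -(cardsID (unmatched p) (mate_reps p)) (setIidPr unmatched_reps); lia.
Qed.

Lemma unmatched_clique p : max_matching p -> is_clique e (unmatched p).
Proof.
move=> pmax; apply/is_cliqueP => a b; rewrite !inE => /andP[aA /eqP pa] /andP[bA /eqP pb] ab.
exact: compl_relN ab (max_matching_unmatched pmax aA bA pa pb).
Qed.

Section SmallIndependence.
Hypothesis alpha_le2 : alpha_on A <= 2.

Lemma compl_triangle_free a b c : a \in A -> b \in A -> c \in A ->
  compl_rel e a b -> compl_rel e a c -> ~~ compl_rel e b c.
Proof.
move=> aA bA cA cab cac; apply/negP => cbc.
have ne x y : compl_rel e x y -> ~~ e x y by case/andP.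
have : #|a |: (b |: [set c])| <= alpha_on A.
  apply: stable_card_le_alpha_on; first by rewrite !subUset !sub1set aA bA cA.
  apply/is_stableP => x y; rewrite !inE => /or3P[] /eqP-> /or3P[] /eqP->;
    by rewrite ?eirr // ne // compl_relC.
rewrite !cardsU1 cards1 !inE (negbTE (compl_rel_neq cbc)).
rewrite (negbTE (compl_rel_neq cab)) (negbTE (compl_rel_neq cac)) /=.
by move/leq_trans/(_ alpha_le2).
Qed.

Lemma compl_nbrs_clique v : v \in A -> is_clique e (compl_nbrs A v).
Proof.
move=> vA; apply/is_cliqueP => a b; rewrite !inE => /andP[aA cva] /andP[bA cvb] ab.
exact: compl_relN ab (compl_triangle_free vA aA bA cva cvb).
Qed.

Lemma card_le_omega_Delta_on : #|A| <= omega_on A + Delta_on A + 1.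
Proof.
have [->|[v vA]] := set_0Vmem A; first by rewrite cards0.
rewrite -(card_compl_nbrs vA) leq_add2r leq_add //; last exact: deg_in_le_Delta_on.
by apply: clique_card_le_omega_on (compl_nbrs_clique vA); apply/subsetP => y /setIdP[].
Qed.

Section UnmatchedVertex.
Variables (p : {ffun T -> T}) (u : T).
Hypotheses (pmax : max_matching p) (uA : u \in A) (pu : p u = u).

Let mp : matching p := proj1 pmax.

Lemma compl_nbr_matched x : x \in compl_nbrs A u -> p x != x.
Proof.
case/setIdP=> xA cux; apply: contraTneq cux => px.
exact: max_matching_unmatched pmax uA xA pu px.
Qed.

(* Otherwise the swap [u -- x] would unmatch [p x] next to the unmatched [v]. *)
Lemma mate_adj_unmatched x v :
  x \in compl_nbrs A u -> v \in unmatched p -> e (p x) v.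
Proof.
move=> xX /setIdP[vA /eqP pv].
have px := compl_nbr_matched xX; have [xA cux] := setIdP xX.
have [_ pxA cxpx] := matching_edge mp px.
have [vx vpx] := matching_neq_fixed mp pv px.
apply: compl_relN; first by rewrite eq_sym.
apply/negP => cpxv.
case: (eqVneq v u) => [vu|vu].
  by move: cxpx; apply/negP/(compl_triangle_free uA xA pxA cux); rewrite -vu compl_relC.
have [q [qmax _ _ qpx qz]] := max_matching_swap pmax uA pu px cux.
by move: cpxv; apply/negP/(max_matching_unmatched qmax pxA vA qpx); rewrite qz.
Qed.

(* Two swaps: [u -- x1] unmatches [p x1], then [p x1 -- p x2] unmatches [x2],
   which is a complement neighbour of the still unmatched [v]. *)
Lemma mates_adj x1 x2 v : x1 \in compl_nbrs A u -> x2 \in compl_nbrs A u ->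
  x1 != x2 -> v \in unmatched p -> v != u -> compl_rel e x2 v -> e (p x1) (p x2).
Proof.
move=> x1X x2X x12 /setIdP[vA /eqP pv] vu c2v.
have p1 := compl_nbr_matched x1X; have p2 := compl_nbr_matched x2X.
have [x1A cu1] := setIdP x1X; have [x2A cu2] := setIdP x2X.
have [_ px1A c1] := matching_edge mp p1.
have x2px1 : x2 != p x1.
  apply: contraTneq c1 => <-; exact: compl_triangle_free uA x1A x2A cu1 cu2.
have [u2 upx2] := matching_neq_fixed mp pu p2.
have px2x1 : p x2 != x1 by apply: contraNneq x2px1 => <-; rewrite matchingK.
have px21 : p x2 != p x1 by apply: contraNneq x12 => /(can_inj (matchingK mp)) ->.
apply: compl_relN; first by rewrite eq_sym.
apply/negP => c12.
have [q [qmax _ _ qpx1 qz]] := max_matching_swap pmax uA pu p1 cu1.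
have qpx2 : q (p x2) = x2 by rewrite qz ?matchingK // eq_sym.
have qpx2n : q (p x2) != p x2 by rewrite qpx2 eq_sym.
have [q2 [q2max _ _ q2x2 q2z]] := max_matching_swap qmax px1A qpx1 qpx2n c12.
have [v1 vpx1] := matching_neq_fixed mp pv p1.
have [v2 vpx2] := matching_neq_fixed mp pv p2.
rewrite qpx2 in q2x2.
have q2v : q2 v = v by rewrite q2z ?qpx2 // 1?eq_sym // qz.
by move: c2v; apply/negP/(max_matching_unmatched q2max x2A vA q2x2 q2v).
Qed.

Let shared := [set x in compl_nbrs A u |
  [exists w in unmatched p, (w != u) && compl_rel e x w]].

Lemma unmatched_mates_clique (Z : {set T}) : Z \subset compl_nbrs A u ->
  {in Z &, forall x1 x2, x1 != x2 -> (x1 \in shared) || (x2 \in shared)} ->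
  #|unmatched p| + #|Z| <= omega_on A.
Proof.
move=> sZX hZ.
have pZ x : x \in Z -> p x != x by move/(subsetP sZX)/compl_nbr_matched.
rewrite -[#|Z|](card_imset _ (can_inj (matchingK mp))) -cardsU_disjoint; last first.
  rewrite -setI_eq0; apply/eqP/setP => y; rewrite in_setI in_set0.
  apply/negbTE/negP => /andP[/setIdP[_ pyy] /imsetP[x /pZ px Ey]].
  by move: pyy; rewrite Ey matchingK // eq_sym (negbTE px).
apply: clique_card_le_omega_on.
  rewrite subUset; apply/andP; split; apply/subsetP => y; first by case/setIdP.
  by case/imsetP => x /pZ px ->; have [] := matching_edge mp px.
apply: is_cliqueU; first exact: unmatched_clique.
  apply/is_cliqueP => _ _ /imsetP[x1 x1Z ->] /imsetP[x2 x2Z ->] ne.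
  have x12 : x1 != x2 by apply: contraNneq ne => ->.
  have [x1X x2X] := (subsetP sZX x1 x1Z, subsetP sZX x2 x2Z).
  case/orP: (hZ x1 x2 x1Z x2Z x12) => /setIdP[_ /exists_inP[w wU /andP[wu cw]]].
    by rewrite esym; apply: (mates_adj x2X x1X _ wU wu cw); rewrite eq_sym.
  exact: (mates_adj x1X x2X x12 wU wu cw).
move=> w _ wU /imsetP[x /(subsetP sZX) xX ->]; rewrite esym.
exact: mate_adj_unmatched.
Qed.

Lemma unmatched_private_clique :
  #|unmatched p :\ u| + #|compl_nbrs A u :\: shared| <= omega_on A.
Proof.
rewrite -cardsU_disjoint; last first.
  rewrite -setI_eq0; apply/eqP/setP => y; rewrite in_setI in_set0.
  apply/negbTE/negP => /andP[/setD1P[_ /setIdP[_ /eqP py]] /setDP[yX _]].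
  by move: (compl_nbr_matched yX); rewrite py eqxx.
apply: clique_card_le_omega_on.
  by rewrite subUset; apply/andP; split; apply/subsetP => y;
    rewrite !inE => /andP[_ /andP[]].
apply: is_cliqueU.
- apply/is_cliqueP => a b /setD1P[_ aU] /setD1P[_ bU].
  exact: (is_cliqueP _ (unmatched_clique pmax)).
- apply/is_cliqueP => a b /setDP[aX _] /setDP[bX _].
  exact: (is_cliqueP _ (compl_nbrs_clique uA)).
move=> w x /setD1P[wu wU] /setDP[xX xs]; rewrite esym.
apply: compl_relN.
  by apply: contraNneq (compl_nbr_matched xX) => ->; case/setIdP: wU.
apply: contra xs => cxw; rewrite inE xX; apply/exists_inP; exists w => //.
by rewrite wu.
Qed.

Lemma compl_nbrs_unmatched_bound :
  #|compl_nbrs A u| + 2 * #|unmatched p| <= 2 * omega_on A.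
Proof.
have shared_sub : shared \subset compl_nbrs A u by apply/subsetP => x /setIdP[].
have cardX : #|compl_nbrs A u| = #|shared| + #|compl_nbrs A u :\: shared|.
  by rewrite -(cardsID shared) (setIidPr shared_sub).
have [Xs0|[x0 /setDP[x0X x0s]]] := set_0Vmem (compl_nbrs A u :\: shared).
  have hs : {in shared &, forall x1 x2,
      x1 != x2 -> (x1 \in shared) || (x2 \in shared)} by move=> x1 x2 ->.
  have := unmatched_mates_clique shared_sub hs.
  by rewrite cardX Xs0 cards0; lia.
have hZ : {in x0 |: shared &, forall x1 x2,
    x1 != x2 -> (x1 \in shared) || (x2 \in shared)}.
  by move=> x1 x2 /setU1P[->|->] // /setU1P[->|->] //; rewrite ?eqxx ?orbT.
have sZ : x0 |: shared \subset compl_nbrs A u by rewrite subUset sub1set x0X.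
have := unmatched_mates_clique sZ hZ; rewrite cardsU1 x0s.
have := unmatched_private_clique.
have : #|unmatched p| = #|unmatched p :\ u| + 1.
  by rewrite (cardsD1 u) inE uA pu eqxx addnC.
lia.
Qed.

End UnmatchedVertex.

Lemma unmatched_bound p : max_matching p ->
  #|A| + 2 * #|unmatched p| <= 2 * omega_on A + Delta_on A + 1.
Proof.
move=> pmax; have [U0|[u /setIdP[uA /eqP pu]]] := set_0Vmem (unmatched p).
  by rewrite U0 cards0; have := card_le_omega_Delta_on; lia.
have := compl_nbrs_unmatched_bound pmax uA pu.
have := card_compl_nbrs uA; have := deg_in_le_Delta_on uA; lia.
Qed.

Lemma small_alpha_colourable : exists2 k, colourable_on A k &
  4 * k <= 2 * omega_on A + #|A| + Delta_on A + 1.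
Proof.
have [p [mp pmax]] := max_matching_exists.
exists #|mate_reps p|; first exact: colourable_on_mate_reps.
by have := card_mate_reps mp; have := unmatched_bound (conj mp pmax); lia.
Qed.

End SmallIndependence.
End ComplementMatching.

Lemma colourable_on_bound (A : {set T}) : exists2 k, colourable_on A k &
  4 * k + maxn (alpha_on A) 3 <= 2 * omega_on A + #|A| + Delta_on A + 4.
Proof.
elim: {A}_.+1 {-2}A (ltnSn #|A|) => // n IH A ltAn.
have [a2|a3] := leqP (alpha_on A) 2.
  have [k colk bk] := small_alpha_colourable a2.
  by exists k => //; lia.
have [S [sSA stS cS]] := alpha_on_attained A.
have colS : colourable_on S 1.
  by have := colourable_on_stable stS; rewrite -card_gt0 cS (ltn_trans _ a3).
have partA : S :|: (A :\: S) = A by rewrite -{1}(setIidPr sSA) setID.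
have dS : [disjoint S & A :\: S].
  by rewrite -setI_eq0 setDE setICA setICr setI0.
have cardA : #|A :\: S| = #|A| - alpha_on A by rewrite cardsDS // cS.
have alpha_le := alpha_on_le_card A.
have [A'0|A'n] := eqVneq (A :\: S) set0.
  exists 1; first by rewrite -partA A'0 setU0.
  by move: cardA; rewrite A'0 cards0; lia.
have /IH[k colk bk] : #|A :\: S| < n by rewrite cardA; lia.
exists (1 + k); first by rewrite -partA; apply: colourable_onU.
have := omega_onS (subsetDl A S); have := Delta_on_max_stableD sSA stS cS A'n.
by move: bk; rewrite cardA; lia.
Qed.

Lemma omega_on_setT : omega_on setT = omega e.
Proof. by apply: eq_bigl => C; rewrite subsetT. Qed.

Lemma alpha_on_setT : alpha_on setT = alpha e.
Proof. by apply: eq_bigl => C; rewrite subsetT. Qed.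

Lemma Delta_on_setT : Delta_on setT = Delta e.
Proof.
apply: eq_big => [x|x _]; first by rewrite inE.
by apply: eq_card => y; rewrite !inE.
Qed.

Lemma omega_pos : 0 < #|T| -> 0 < omega e.
Proof.
case/card_gt0P => x _; rewrite -omega_on_setT -(cards1 x).
apply: clique_card_le_omega_on; first exact: subsetT.
by apply/is_cliqueP => a b /set1P-> /set1P->; rewrite eqxx.
Qed.

Lemma chi_alpha_le_card : 0 < #|T| ->
  4 * chi eirr + alpha e <= 2 * omega e + 2 * Delta e + 4 * #|T|.-1 + 6.
Proof.
move=> hT; have [S [_ stS cS]] := alpha_on_attained setT.
have := chi_le_colourable hT (colourable_on_stable_compl setT stS).
have := cardsID S setT; rewrite setTI cardsT cS alpha_on_setT.
by have := omega_pos hT; case: (_ != set0); lia.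
Qed.

Section CompleteJoin.
Variables (A B : {set T}).
Hypotheses (dAB : [disjoint A & B]) (eAB : {in A & B, forall x y, e x y}).

Lemma omega_on_join : omega_on A + omega_on B <= omega e.
Proof.
have [CA [sCA clA <-]] := omega_on_attained A.
have [CB [sCB clB <-]] := omega_on_attained B.
rewrite -cardsU_disjoint; last exact: disjointWl sCA (disjointWr sCB dAB).
rewrite -omega_on_setT; apply: clique_card_le_omega_on; first exact: subsetT.
by apply: is_cliqueU => // x y /(subsetP sCA) xA /(subsetP sCB) yB; apply: eAB.
Qed.

Lemma Delta_on_join : A != set0 -> #|B| + Delta_on A <= Delta e.
Proof.
case/Delta_on_attained=> x xA ->; rewrite -Delta_on_setT.
apply: leq_trans (deg_in_le_Delta_on (in_setT x)).
rewrite /deg_in addnC -cardsU_disjoint.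
  apply/subset_leq_card/subsetP => y; rewrite !inE => /orP[/andP[_ ->] // | yB].
  exact: eAB.
by apply: disjointWl dAB; apply/subsetP => y /setIdP[].
Qed.

Lemma stable_join (S : {set T}) : is_stable e S -> S \subset A :|: B ->
  S \subset A \/ S \subset B.
Proof.
move=> stS sSAB; have [sSA|/subsetPn[y yS yA]] := boolP (S \subset A); first by left.
right; apply/subsetP => x xS; have /setUP[xA|//] := subsetP sSAB x xS.
have /setUP[yA'|yB] := subsetP sSAB y yS; first by rewrite yA' in yA.
by have := is_stableP _ stS x y xS yS; rewrite (eAB xA yB).
Qed.

End CompleteJoin.

Lemma disconnects_join (K : {set T}) : disconnects (compl_rel e) K ->
  exists A B : {set T}, [/\ A != set0, B != set0, [disjoint A & B],
     A :|: B = ~: K & {in A & B, forall x y, e x y}].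
Proof.
case/existsP=> u /existsP[v /and3P[uK vK nuv]].
set r := [rel x y | _] in nuv.
exists [set x | (x \notin K) && connect r u x], [set x | (x \notin K) && ~~ connect r u x].
split.
- by apply/set0Pn; exists u; rewrite inE uK connect0.
- by apply/set0Pn; exists v; rewrite inE vK nuv.
- rewrite -setI_eq0; apply/eqP/setP => y; rewrite !inE.
  by case: (connect r u y); rewrite ?andbF.
- by apply/setP => y; rewrite !inE -andb_orr orbN andbT.
move=> x y; rewrite !inE => /andP[xK cx] /andP[yK ncy]; apply/negPn/negP => nexy.
have xy : x != y by apply: contraNneq ncy => <-.
move/negP: ncy; apply; apply: connect_trans cx (connect1 _).
by rewrite /= /compl_rel /= xy nexy xK yK.
Qed.

Lemma chi_alpha_le_separator (K : {set T}) : 0 < #|T| ->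
  disconnects (compl_rel e) K ->
  4 * chi eirr + alpha e <= 2 * omega e + 2 * Delta e + 4 * #|K| + 6.
Proof.
move=> hT /disconnects_join[A [B [An Bn dAB ABK eAB]]].
have eBA : {in B & A, forall x y, e x y} by move=> x y xB yA; rewrite esym eAB.
have [S [_ stS cS]] := alpha_on_attained setT.
have [kA colA bA] := colourable_on_bound A.
have [kB colB bB] := colourable_on_bound B.
have dK : [disjoint A :|: B & K] by rewrite ABK -setI_eq0 setIC setICr.
have colT : colourable_on setT (kA + kB + ((S :&: K != set0) + #|K :\: S|)).
  rewrite -(setUCr K) setUC -ABK.
  exact: colourable_onU dK (colourable_onU dAB colA colB) (colourable_on_stable_compl K stS).
have chiT := chi_le_colourable hT colT.
have : #|S :\: K| <= alpha_on A \/ #|S :\: K| <= alpha_on B.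
  have stSK : is_stable e (S :\: K).
    by apply/is_stableP => x y /setDP[xS _] /setDP[yS _]; apply: (is_stableP _ stS).
  have sSK : S :\: K \subset A :|: B by rewrite ABK setDE subsetIr.
  by case: (stable_join eAB stSK sSK) => sub; [left | right];
    apply: stable_card_le_alpha_on.
have := cardsID K S; have := cardsID S K; rewrite setIC.
have : (S :&: K != set0) <= #|S :&: K| by rewrite -card_gt0; case: #|_|.
have := omega_on_join dAB eAB; have := Delta_on_join dAB eAB An.
have dBA : [disjoint B & A] by rewrite disjoint_sym.
have := Delta_on_join dBA eBA Bn.
rewrite -alpha_on_setT -cS; lia.
Qed.

End Graph.

Lemma chi_alpha_le_kappa (T : finType) (e : rel T) (esym : symmetric e)
  (eirr : irreflexive e) : 0 < #|T| ->
  4 * chi eirr + alpha e <= 2 * omega e + 2 * Delta e + 4 * kappa (compl_rel e) + 6.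
Proof.
move=> hT; apply: (big_ind (fun m => 4 * chi eirr + alpha e <= _ + 4 * m + 6)).
- exact: chi_alpha_le_card.
- by move=> m1 m2 bm1 bm2; rewrite /minn; case: ifP.
- by move=> K; apply: chi_alpha_le_separator.
Qed.

Import GRing.Theory Num.Theory.
Local Open Scope ring_scope.

Theorem corollary7 (T : finType) (e : rel T)
  (esym : symmetric e) (eirr : irreflexive e) (hT : (0 < #|T|)%N) :
  ((chi eirr)%:R : rat) <=
    ((omega e)%:R + (Delta e)%:R + 1) / 2 + (kappa (compl_rel e))%:R + 1
    - (alpha e)%:R / 4.
Proof.
have := chi_alpha_le_kappa esym eirr hT.
move: (chi eirr) (alpha e) (omega e) (Delta e) (kappa (compl_rel e)) => c a o d k.
rewrite -(ler_nat rat) !natrD; lra.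
Qed.
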